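(* For any $\varepsilon \in \{-1,1\}^n$ and any $y \in \mathbb{R}^n$, let $$S = \{1 \le i \le n : \mathrm{sign}(y_i) \neq \varepsilon_i\}.$$ Then $$\left\| y - \left\langle y, \frac{\varepsilon}{\|\varepsilon\|}\right\rangle \frac{\varepsilon}{\|\varepsilon\|}\right\|^2 \ge \frac{\min\{\#S, n - \#S\}}{n}\, \|y\|^2.$$
   Context: $\mathrm{sign}(t)$ denotes the sign of a real number $t$ (with $\mathrm{sign}(0)=0$); $\|\cdot\|$ is the Euclidean norm. *)

From mathcomp Require Import all_boot all_order all_algebra.
Set Implicit Arguments. Unset Strict Implicit. Unset Printing Implicit Defensive.
Import Order.TTheory GRing.Theory Num.Theory.
Local Open Scope ring_scope.

Definition dotv (R : rcfType) (n : nat) (x y : 'I_n -> R) : R :=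
  \sum_(i < n) x i * y i.

Definition normv (R : rcfType) (n : nat) (x : 'I_n -> R) : R :=
  Num.sqrt (dotv x x).

From mathcomp Require Import all_boot all_order all_algebra.
From mathcomp Require Import ring lra zify.
Set Implicit Arguments. Unset Strict Implicit. Unset Printing Implicit Defensive.
Import Order.TTheory GRing.Theory Num.Theory.
Local Open Scope ring_scope.

(* Removing the component along the unit vector u := eps/||eps|| leaves
   ||y||^2 - <y,eps>^2/n, so it suffices to show <y,eps>^2 <= (n - m) ||y||^2
   with m = min(#S, n - #S).  Split <y,eps> = b + a, where b sums y_i eps_i over
   S (all terms <= 0) and a over the complement (all terms >= 0).  Since b and a
   have opposite signs, (a + b)^2 <= max(a^2, b^2), and Cauchy-Schwarz bounds
   b^2 by #S ||y||^2 and a^2 by (n - #S) ||y||^2; both counts are <= n - m. *)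

Lemma sqr_sum_le_card_sum_sqr (R : realFieldType) (I : finType) (P : {pred I})
    (a : I -> R) :
  (\sum_(i in P) a i) ^+ 2 <= #|P|%:R * \sum_(i in P) a i ^+ 2.
Proof.
rewrite expr2 mulr_suml.
apply: (@le_trans _ _ (\sum_(i in P) \sum_(j in P) (a i ^+ 2 + a j ^+ 2) / 2)).
  apply: ler_sum => i _; rewrite mulr_sumr; apply: ler_sum => j _.
  have : 0 <= (a i - a j) ^+ 2 by apply: sqr_ge0.
  lra.
under eq_bigr do rewrite -mulr_suml big_split /= sumr_const.
rewrite -mulr_suml big_split /= sumr_const sumrMnl mulr_natl.
by rewrite -[X in X / 2]mulr2n -[_ *+ 2]mulr_natr mulfK ?pnatr_eq0.
Qed.

Lemma sqr_add_le_max (R : realDomainType) (a b : R) :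
  b <= 0 -> 0 <= a -> (a + b) ^+ 2 <= Num.max (a ^+ 2) (b ^+ 2).
Proof.
move=> b_le0 a_ge0; rewrite le_max; apply/orP.
case: (lerP 0 (a + b)) => sum_sign; [left | right].
- have : b * (a + (a + b)) <= 0 by rewrite mulr_le0_ge0 //; lra.
  nra.
- have : a * (b + (a + b)) <= 0 by rewrite mulr_ge0_le0 //; lra.
  nra.
Qed.

Lemma sgr_neq_mul_le0 (R : realDomainType) (e y : R) :
  e = 1 \/ e = -1 -> Num.sg y != e -> y * e <= 0.
Proof.
case=> ->; case: sgrP; rewrite ?eqxx ?mul0r // => y_sign _; lra.
Qed.

Section DotProduct.
Variables (R : rcfType) (n : nat).
Implicit Types (x y u eps : 'I_n -> R).

Lemma dotv_ge0 x : 0 <= dotv x x.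
Proof. by apply: sumr_ge0 => i _; rewrite -expr2 sqr_ge0. Qed.

Lemma sqr_normv x : normv x ^+ 2 = dotv x x.
Proof. by rewrite sqr_sqrtr ?dotv_ge0. Qed.

Lemma dotvMr x y (c : R) : dotv x (fun i => y i * c) = dotv x y * c.
Proof. by rewrite /dotv mulr_suml; apply: eq_bigr => i _; rewrite mulrA. Qed.

Lemma dotvMl x y (c : R) : dotv (fun i => x i * c) y = dotv x y * c.
Proof.
by rewrite /dotv mulr_suml; apply: eq_bigr => i _; rewrite mulrAC.
Qed.

Lemma dotv_sub_proj y u : dotv u u = 1 ->
  let w := fun i => y i - dotv y u * u i in dotv w w = dotv y y - dotv y u ^+ 2.
Proof.
move=> uu1 w; set c := dotv y u.
have expand i : w i * w i = y i * y i - (2 * c) * (y i * u i) + c ^+ 2 * (u i * u i).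
  by rewrite /w /c; ring.
rewrite /dotv (eq_bigr _ (fun i _ => expand i)) big_split sumrB /= -!mulr_sumr.
by rewrite -/(dotv y y) -/(dotv y u) -/(dotv u u) -/c uu1; ring.
Qed.

Lemma dotv_sign_vector eps : (forall i, eps i = 1 \/ eps i = -1) ->
  dotv eps eps = n%:R.
Proof.
move=> heps; rewrite /dotv (eq_bigr (fun=> 1)) ?sumr_const ?card_ord // => i _.
by case: (heps i) => ->; rewrite ?mulrNN mulr1.
Qed.

Lemma sqr_dotv_le_split eps y (S : {set 'I_n}) :
  (forall i, eps i = 1 \/ eps i = -1) ->
  {in S, forall i, y i * eps i <= 0} -> {in ~: S, forall i, 0 <= y i * eps i} ->
  dotv y eps ^+ 2 <= (n - minn #|S| (n - #|S|))%:R * dotv y y.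
Proof.
move=> heps S_le0 SC_ge0.
have sqr_ye i : (y i * eps i) ^+ 2 = y i * y i.
  by case: (heps i) => ->; rewrite expr2; ring.
rewrite /dotv (bigID (mem S)) [X in _ <= _ * X](bigID (mem S)) /=.
set b := \sum_(i in S) _; set Y1 := \sum_(i in S) _.
rewrite -!(eq_bigl _ _ (fun i => in_setC i S)).
set a := \sum_(i in ~: S) _; set Y2 := \sum_(i in ~: S) _.
have b_le0 : b <= 0 by apply: sumr_le0.
have a_ge0 : 0 <= a by apply: sumr_ge0.
have Y1_ge0 : 0 <= Y1 by apply: sumr_ge0 => i _; rewrite -expr2 sqr_ge0.
have Y2_ge0 : 0 <= Y2 by apply: sumr_ge0 => i _; rewrite -expr2 sqr_ge0.
have b2 : b ^+ 2 <= #|S|%:R * Y1.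
  by rewrite /Y1 -(eq_bigr _ (fun i _ => sqr_ye i)) sqr_sum_le_card_sum_sqr.
have a2 : a ^+ 2 <= #|~: S|%:R * Y2.
  by rewrite /Y2 -(eq_bigr _ (fun i _ => sqr_ye i)) sqr_sum_le_card_sum_sqr.
have cardSC := cardsC S; rewrite card_ord in cardSC.
have : (#|S| <= n - minn #|S| (n - #|S|))%N by lia.
have : (#|~: S| <= n - minn #|S| (n - #|S|))%N by lia.
rewrite -!(ler_nat R); move: (_ - _)%N%:R => M SC_le S_le.
rewrite addrC; apply: le_trans (sqr_add_le_max b_le0 a_ge0) _.
rewrite ge_max.
have card_S_ge0 : 0 <= (#|S|%:R : R) := ler0n _ _.
have card_SC_ge0 : 0 <= (#|~: S|%:R : R) := ler0n _ _.
apply/andP; split; nra.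
Qed.

End DotProduct.

Theorem lemma2 (R : rcfType) (n : nat) (eps y : 'I_n -> R)
  (heps : forall i, eps i = 1 \/ eps i = -1) :
  let u := fun i => eps i / normv eps in
  let S := [set i : 'I_n | Num.sg (y i) != eps i] in
  (normv (fun i => y i - dotv y u * u i)) ^+ 2 >=
    (minn #|S| (n - #|S|))%:R / n%:R * (normv y) ^+ 2.
Proof.
cbv zeta; set u := fun i => eps i / normv eps; set S := [set i | _].
rewrite !sqr_normv.
have [n0|n_gt0] := posnP n.
  have -> : n%:R = 0 :> R by rewrite n0.
  by rewrite invr0 mulr0 mul0r dotv_ge0.
have N_gt0 : 0 < n%:R :> R by rewrite ltr0n.
have norm_eps : normv eps ^+ 2 = n%:R by rewrite sqr_normv dotv_sign_vector.
have uu1 : dotv u u = 1.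
  rewrite dotvMl dotvMr dotv_sign_vector // -mulrA -invfM -expr2 norm_eps.
  by rewrite divff ?gt_eqF.
rewrite dotv_sub_proj // dotvMr expr_div_n norm_eps.
set m := minn #|S| (n - #|S|).
have bound : dotv y eps ^+ 2 <= (n%:R - m%:R) * dotv y y.
  rewrite -natrB; last exact: leq_trans (geq_minr _ _) (leq_subr _ _).
  apply: (sqr_dotv_le_split heps) => i; rewrite !inE.
  - exact: sgr_neq_mul_le0.
  - by move=> /negPn/eqP <-; rewrite mulrC -normrEsg.
set D := dotv y eps in bound *; set Y := dotv y y in bound *.
have -> : m%:R / n%:R * Y <= Y - D ^+ 2 / n%:R =
    (0 <= ((n%:R - m%:R) * Y - D ^+ 2) / n%:R).
  by rewrite -subr_ge0; congr (0 <= _); field; rewrite gt_eqF.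
by rewrite divr_ge0 ?subr_ge0 // ltW.
Qed.
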